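(* For every integer $n\ge 2$, $F_{2 n-1} F_{n-2}^3+F_n (F_n F_{n+2}-F_{2 n}) F_{2 n+1}= F_{n-2}\left(F_n^2 (F_{2 n-1}+F_{2 n+1})-F_{2 n-2} F_{2 n-1}\right)$, where $F_k$ denotes the $k$-th Fibonacci number.
   Context: The Fibonacci numbers are defined by $F_0=0$, $F_1=1$, $F_k=F_{k-1}+F_{k-2}$ for $k\ge 2$. *)

From mathcomp Require Import all_boot all_algebra.
Set Implicit Arguments. Unset Strict Implicit. Unset Printing Implicit Defensive.

Fixpoint fib (k : nat) : nat :=
  match k with
  | 0 => 0
  | 1 => 1
  | (k'.+1 as k1).+1 => fib k1 + fib k'
  end.

From mathcomp Require Import all_boot all_algebra.
From mathcomp Require Import ring zify.
Import GRing.Theory.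
Local Open Scope ring_scope.

(* Writing n = m + 2, the addition formula expresses every Fibonacci number in
   the identity as a polynomial in F_m and F_{m+1}; the identity then becomes
   a polynomial identity in these two variables. *)

Lemma fibSS (n : nat) : fib n.+2 = (fib n.+1 + fib n)%N.
Proof. by []. Qed.

Lemma fib_add (m n : nat) :
  fib (m + n).+1 = (fib m.+1 * fib n.+1 + fib m * fib n)%N.
Proof.
elim: m n => [|m IHm] n; first by rewrite mul1n mul0n addn0.
by rewrite addSnnS IHm !fibSS; ring.
Qed.

Theorem proposition7p2 (n : nat) (hn : (2 <= n)%N) :
  let F k : int := (fib k)%:Z in
  F (2 * n - 1)%N * F (n - 2)%N ^+ 3
    + F n * (F n * F n.+2 - F (2 * n)%N) * F (2 * n + 1)%N
  = F (n - 2)%N * (F n ^+ 2 * (F (2 * n - 1)%N + F (2 * n + 1)%N)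
                   - F (2 * n - 2)%N * F (2 * n - 1)%N).
Proof.
move=> F; rewrite {}/F.
case: n hn => [|[|m]] // _.
have -> : (2 * m.+2 - 2 = (m.+1 + m).+1)%N by lia.
have -> : (2 * m.+2 - 1 = (m.+1 + m.+1).+1)%N by lia.
have -> : (2 * m.+2 + 1 = (m.+2 + m.+2).+1)%N by lia.
have -> : (2 * m.+2 = (m.+2 + m.+1).+1)%N by lia.
have -> : (m.+2 - 2 = m)%N by lia.
rewrite !fib_add !fibSS !(PoszD, PoszM).
ring.
Qed.
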